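(* Let $\mathbf{J}\in\mathbb{R}^{n\times n}$ be a real symmetric matrix with zero diagonal, and let $\alpha,\beta>0$ be such that $\lambda_{\min}(\mathbf{J}+\alpha\mathbf{I})>0$. Let $\{\boldsymbol{x}^{(k)}\}_{k\ge0}$ be the DOCH iterates starting from an arbitrary $\boldsymbol{x}^{(0)}\in\mathbb{R}^n$. Then there exists $\sigma>0$ such that for all $k\ge1$, $$\|\nabla\mathcal{H}(\boldsymbol{x}^{(k)})\|_2\le\sigma\|\boldsymbol{x}^{(k)}-\boldsymbol{x}^{(k-1)}\|_2.$$
   Context: Let $f(\boldsymbol{x})=\frac{\beta}{4}\sum_i x_i^4$, $g(\boldsymbol{x})=\frac12\boldsymbol{x}^\top(\mathbf{J}+\alpha\mathbf{I})\boldsymbol{x}$ and $\mathcal{H}=f-g$. The DOCH iterates are defined by $\boldsymbol{x}^{(k+1)}$ being the minimizer of $F_k(\boldsymbol{x})=f(\boldsymbol{x})-g(\boldsymbol{x}^{(k)})-\nabla g(\boldsymbol{x}^{(k)})^\top(\boldsymbol{x}-\boldsymbol{x}^{(k)})$; explicitly, $\boldsymbol{x}^{(k+1)}=\varphi(\beta^{-1}(\mathbf{J}+\alpha\mathbf{I})\boldsymbol{x}^{(k)})$ with $\varphi$ the componentwise real cube root. *)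

From HB Require Import structures.
From mathcomp Require Import all_boot all_order all_algebra.
From mathcomp Require Import all_classical all_reals all_analysis.
Set Implicit Arguments. Unset Strict Implicit. Unset Printing Implicit Defensive.
Import Order.TTheory GRing.Theory Num.Theory.
Local Open Scope ring_scope.

Section DOCH.
Variables (R : realType) (n : nat).

Definition cbrt (t : R) : R :=
  if 0 <= t then powR t (3%:R^-1) else - powR (- t) (3%:R^-1).

(* vectors of R^n are row vectors 'rV[R]_n; x 0 i is the i-th coordinate *)
Definition mxv (M : 'M[R]_n) (x : 'rV[R]_n) : 'rV[R]_n :=
  \row_i \sum_j M i j * x 0 j.

Definition f_doch (beta : R) (x : 'rV[R]_n) : R :=
  beta / 4%:R * \sum_i x 0 i ^+ 4.

Definition g_doch (J : 'M[R]_n) (alpha : R) (x : 'rV[R]_n) : R :=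
  2%:R^-1 * \sum_i \sum_j x 0 i * (J + alpha%:M) i j * x 0 j.

Definition H_doch (J : 'M[R]_n) (alpha beta : R) (x : 'rV[R]_n) : R :=
  f_doch beta x - g_doch J alpha x.

Definition gradH (J : 'M[R]_n) (alpha beta : R) (x : 'rV[R]_n) : 'rV[R]_n :=
  \row_i derive1 (fun t : R => H_doch J alpha beta (x + t *: delta_mx 0 i)) 0.

Definition norm2 (x : 'rV[R]_n) : R := Num.sqrt (\sum_i x 0 i ^+ 2).

Definition doch_step (J : 'M[R]_n) (alpha beta : R) (x : 'rV[R]_n) : 'rV[R]_n :=
  \row_i cbrt (beta^-1 * mxv (J + alpha%:M) x 0 i).

Definition doch_iter (J : 'M[R]_n) (alpha beta : R) (x0 : 'rV[R]_n) (k : nat)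
  : 'rV[R]_n := iter k (doch_step J alpha beta) x0.

End DOCH.

From HB Require Import structures.
From mathcomp Require Import all_boot all_order all_algebra.
From mathcomp Require Import all_classical all_reals all_analysis.
From mathcomp Require Import ring lra.
Set Implicit Arguments. Unset Strict Implicit. Unset Printing Implicit Defensive.
Import Order.TTheory GRing.Theory Num.Theory.
Local Open Scope ring_scope.

(* With M := J + alpha I, the DOCH update x+ = phi(beta^-1 M x) is exactly the
   optimality condition beta (x+)^3 = M x of the convex subproblem F_k.  Since
   grad H(x) = beta x^3 - M x, this gives grad H(x^(k)) = M (x^(k-1) - x^(k)),
   so sigma can be any bound on the operator norm of M, e.g. 1 + sum |M_ij|. *)

Lemma powR_inv3_expr3 (R : realType) (t : R) : 0 <= t -> (t `^ 3^-1) ^+ 3 = t.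
Proof.
move=> t_ge0; rewrite -powR_mulrn ?powR_ge0 // -powRrM.
by rewrite mulVf ?pnatr_eq0 // powRr1.
Qed.

Lemma cbrt_expr3 (R : realType) (t : R) : cbrt t ^+ 3 = t.
Proof.
rewrite /cbrt; case: ifP => [|/negbT]; first exact: powR_inv3_expr3.
rewrite -ltNge -oppr_gt0 => /ltW Nt_ge0.
by rewrite exprNn powR_inv3_expr3 // -signr_odd expr1 mulN1r opprK.
Qed.

(* Along a coordinate line x + t e_i, f and g are polynomials in t, so the
   partial derivatives in gradH are computed as formal derivatives at 0. *)
Section DerivativeAlongLine.
Variables (R : realType) (n : nat) (x : 'rV[R]_n) (i : 'I_n).

Local Notation e := (delta_mx 0 i : 'rV[R]_n).

Definition line_coord (j : 'I_n) : {poly R} := (x 0 j)%:P + (e 0 j)%:P * 'X.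

Definition line_quartic : {poly R} := \sum_j line_coord j ^+ 4.

Definition line_quadratic (M : 'M[R]_n) : {poly R} :=
  \sum_a \sum_b line_coord a * (M a b)%:P * line_coord b.

Lemma line_coordE t j : (line_coord j).[t] = (x + t *: e) 0 j.
Proof. by rewrite hornerD hornerMX !hornerC !mxE mulrC. Qed.

Lemma line_coord0 j : (line_coord j).[0] = x 0 j.
Proof. by rewrite line_coordE scale0r addr0. Qed.

Lemma deriv_line_coord j : (line_coord j)^`() = (e 0 j)%:P.
Proof. by rewrite derivD derivC add0r deriv_mulC derivX mulr1. Qed.

Lemma sum_delta_mull (F : 'I_n -> R) : \sum_j e 0 j * F j = F i.
Proof.
rewrite (bigD1 i) //= mxE !eqxx mul1r big1 ?addr0 // => j ji.
by rewrite mxE (negbTE ji) mul0r.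
Qed.

Lemma f_doch_line beta :
  (fun t => f_doch beta (x + t *: e)) = horner ((beta / 4%:R) *: line_quartic).
Proof.
apply/funext => t; rewrite hornerZ horner_sum /f_doch.
by congr (_ * _); apply: eq_bigr => j _; rewrite horner_exp line_coordE.
Qed.

Lemma g_doch_line J alpha :
  (fun t => g_doch J alpha (x + t *: e)) =
  horner (2%:R^-1 *: line_quadratic (J + alpha%:M)).
Proof.
apply/funext => t; rewrite hornerZ horner_sum /g_doch.
congr (_ * _); apply: eq_bigr => a _; rewrite horner_sum.
by apply: eq_bigr => b _; rewrite !hornerM hornerC !line_coordE.
Qed.

Lemma deriv_line_quartic0 : line_quartic^`().[0] = 4%:R * x 0 i ^+ 3.
Proof.
rewrite /line_quartic (big_morph _ (@derivD R) (@deriv0 R)) horner_sum.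
rewrite -[RHS](sum_delta_mull (fun j => 4%:R * x 0 j ^+ 3)).
apply: eq_bigr => j _.
by rewrite deriv_exp deriv_line_coord hornerMn hornerM hornerC horner_exp
  line_coord0 -mulrnAr mulr_natl.
Qed.

Lemma deriv_line_quadratic0 (M : 'M[R]_n) : M^T = M ->
  (line_quadratic M)^`().[0] = 2%:R * mxv M x 0 i.
Proof.
move=> Msym; have M_sym a b : M a b = M b a.
  by rewrite -[in LHS]Msym mxE.
rewrite /line_quadratic (big_morph _ (@derivD R) (@deriv0 R)) horner_sum.
transitivity (\sum_a \sum_b (e 0 a * (M a b * x 0 b) + e 0 b * (M b a * x 0 a))).
  apply: eq_bigr => a _.
  rewrite (big_morph _ (@derivD R) (@deriv0 R)) horner_sum.
  apply: eq_bigr => b _.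
  rewrite !derivM derivC !deriv_line_coord mulr0 addr0 hornerD.
  by rewrite !hornerM !hornerC !line_coord0 (M_sym b a); ring.
under eq_bigr do rewrite big_split /=.
rewrite big_split /= [X in _ + X]exchange_big /= -mulr2n mulr_natl mxE.
congr (_ *+ 2).
rewrite -[RHS](sum_delta_mull (fun a => \sum_j M a j * x 0 j)).
by apply: eq_bigr => a _; rewrite mulr_sumr.
Qed.

End DerivativeAlongLine.

Section DOCH.
Variables (R : realType) (n : nat).
Implicit Types (J M : 'M[R]_n) (x y z : 'rV[R]_n).

Lemma gradH_E J alpha beta x : (J + alpha%:M)^T = J + alpha%:M ->
  gradH J alpha beta x = \row_i (beta * x 0 i ^+ 3 - mxv (J + alpha%:M) x 0 i).
Proof.
move=> Msym; apply/rowP => i; rewrite !mxE.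
have -> : (fun t => H_doch J alpha beta (x + t *: delta_mx 0 i)) =
    horner ((beta / 4%:R) *: line_quartic x i
            - 2%:R^-1 *: line_quadratic x i (J + alpha%:M)).
  by apply/funext => t; rewrite hornerD hornerN -f_doch_line -g_doch_line.
rewrite -derivE derivB !derivZ hornerD hornerN !hornerZ.
rewrite deriv_line_quartic0 deriv_line_quadratic0 //.
by rewrite mulKf ?pnatr_eq0 // mulrA divfK ?pnatr_eq0 // mxE.
Qed.

Lemma mxvB M y z : mxv M y - mxv M z = mxv M (y - z).
Proof.
apply/rowP => i; rewrite !mxE -sumrB.
by apply: eq_bigr => j _; rewrite !mxE mulrBr.
Qed.

Lemma doch_step_expr3 J alpha beta y i : beta != 0 ->
  beta * doch_step J alpha beta y 0 i ^+ 3 = mxv (J + alpha%:M) y 0 i.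
Proof. by move=> beta_neq0; rewrite mxE cbrt_expr3 mulVKf. Qed.

Lemma gradH_doch_step J alpha beta y :
  (J + alpha%:M)^T = J + alpha%:M -> beta != 0 ->
  gradH J alpha beta (doch_step J alpha beta y) =
  mxv (J + alpha%:M) (y - doch_step J alpha beta y).
Proof.
move=> Msym beta_neq0; rewrite gradH_E // -mxvB.
apply/rowP => i; rewrite [LHS]mxE doch_step_expr3 // [RHS]mxE.
by congr (_ + _); rewrite [RHS]mxE.
Qed.

Lemma sqrtr_le_sqr (a b : R) : 0 <= b -> a <= b ^+ 2 -> Num.sqrt a <= b.
Proof.
move=> b_ge0 ab; rewrite -(ger0_norm b_ge0) -sqrtr_sqr ler_sqrt //.
exact: sqr_ge0.
Qed.

Lemma norm2_ge0 x : 0 <= norm2 x.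
Proof. exact: sqrtr_ge0. Qed.

Lemma norm2_subC x y : norm2 (x - y) = norm2 (y - x).
Proof.
rewrite /norm2; congr Num.sqrt; apply: eq_bigr => i _.
by rewrite !mxE -sqrrN opprB.
Qed.

Lemma coord_le_norm2 x j : `|x 0 j| <= norm2 x.
Proof.
rewrite /norm2 -sqrtr_sqr ler_sqrt ?sumr_ge0 // => [|k _]; last exact: sqr_ge0.
by rewrite (bigD1 j) //= lerDl sumr_ge0 // => k _; exact: sqr_ge0.
Qed.

Lemma norm2_le_sum_abs x : norm2 x <= \sum_i `|x 0 i|.
Proof.
apply: sqrtr_le_sqr; first exact: sumr_ge0.
have sum_sqr_le :
    0 <= \sum_i `|x 0 i| /\ \sum_i x 0 i ^+ 2 <= (\sum_i `|x 0 i|) ^+ 2.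
  apply: (big_ind2 (fun a b => 0 <= b /\ a <= b ^+ 2)).
  - by rewrite expr0n.
  - by move=> a1 b1 a2 b2 [b1_ge0 ab1] [b2_ge0 ab2]; split; [exact: addr_ge0|nra].
  - by move=> i _; rewrite real_normK ?num_real.
exact: sum_sqr_le.2.
Qed.

Definition mx_abs_sum M : R := \sum_i \sum_j `|M i j|.

Lemma mx_abs_sum_ge0 M : 0 <= mx_abs_sum M.
Proof. by apply: sumr_ge0 => i _; apply: sumr_ge0. Qed.

Lemma norm2_mxv_le M x : norm2 (mxv M x) <= mx_abs_sum M * norm2 x.
Proof.
apply: (le_trans (norm2_le_sum_abs _)); rewrite mulr_suml; apply: ler_sum => i _.
rewrite mxE; apply: (le_trans (ler_norm_sum _ _ _)); rewrite mulr_suml.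
apply: ler_sum => j _; rewrite normrM; apply: ler_wpM2l => //.
exact: coord_le_norm2.
Qed.

End DOCH.

Theorem propositionS9 (R : realType) (n : nat) (J : 'M[R]_n) (alpha beta : R) :
  J^T = J ->
  (forall i, J i i = 0) ->
  0 < alpha -> 0 < beta ->
  (* lambda_min(J + alpha I) > 0: every eigenvalue of J + alpha I is positive *)
  (forall a : R, eigenvalue (J + alpha%:M) a -> 0 < a) ->
  forall x0 : 'rV[R]_n,
  exists sigma : R, 0 < sigma /\
    forall k : nat, (1 <= k)%N ->
      norm2 (gradH J alpha beta (doch_iter J alpha beta x0 k))
      <= sigma * norm2 (doch_iter J alpha beta x0 k - doch_iter J alpha beta x0 k.-1).
Proof.
move=> Jsym _ _ beta_gt0 _ x0.
have Msym : (J + alpha%:M)^T = J + alpha%:M by rewrite linearD /= Jsym tr_scalar_mx.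
have C_ge0 := mx_abs_sum_ge0 (J + alpha%:M).
exists (1 + mx_abs_sum (J + alpha%:M)); split; first exact: ltr_wpDr.
case=> // k _; rewrite /doch_iter iterS /=.
rewrite gradH_doch_step ?gt_eqF // norm2_subC.
apply: (le_trans (norm2_mxv_le _ _)); apply: ler_wpM2r; first exact: norm2_ge0.
by rewrite lerDr.
Qed.
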